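(* In the setting described in the context: (i) if $\mathcal B'\in M_{r+1}(\mathbb Z)$ satisfies $\mathcal A\mathcal B'=nI_{r+1}$, then $t$ divides $n$; (ii) consequently, if $(\alpha'_0,\dots,\alpha'_r)\in L^{r+1}$ satisfies $au_j(\alpha'_j)=n>0$ for all $j$ and $au_k(\alpha'_j)=0$ for all $k\ne j$ (a uniform positive dual family to $(au_0,\dots,au_r)$), then $t$ divides $n$; (iii) the family $(\alpha_0,\dots,\alpha_r)$ has the property that for every prime $p$ there is an index $0\le j\le r$ such that $\alpha_j-n'h'\notin pL$ for all $n'\in\mathbb Z$.
   Context: Let $\mathbb K$ be a number field of degree $d=r+2\ge2$ with exactly one pair of complex conjugate embeddings; order its embeddings $\sigma_1,\dots,\sigma_r$ (real), $\sigma_{r+1}=\sigma_{\mathbb C}$, $\sigma_{r+2}=\overline{\sigma_{\mathbb C}}$. A $\mathbb Q$-basis $(e_0,\dots,e_{r+1})$ of $\mathbb K$ is positive if $i\cdot\det(\sigma_j(e_{k-1}))_{1\le j,k\le d}>0$. Let $\mathfrak f\ne\mathcal O_{\mathbb K}$ be an integral ideal, $q\mathbb Z=\mathfrak f\cap\mathbb Z$, $\mathfrak b$ an integral ideal coprime to $\mathfrak f$, $L=\mathfrak f\mathfrak b^{-1}$, $\mathfrak a$ an integral ideal coprime to $\mathfrak f\mathfrak b$ with $\mathfrak a^{-1}L/L$ cyclic, $N=\mathcal N(\mathfrak a)$. An element $h\in L$ is admissible if $h/q-1\in L$ and $h/N$ generates $\mathfrak a^{-1}L/L$. Let $\mathcal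 O^{+,\times}_{\mathfrak f}$ be the group of units $\equiv1\bmod\mathfrak f$ that are positive at all real embeddings. Let $u_1,\dots,u_r\in\mathcal O^{+,\times}_{\mathfrak f}$ be such that $1,u_1,\dots,u_r$ are $\mathbb Q$-linearly independent, and $u_0=1$. Let $h\in L$ be admissible, $h=mh'$ with $m\in\mathbb Z_{>0}$ and $h'$ primitive in $L$. Fix a positive $\mathbb Z$-basis $(e_0=h',e_1,\dots,e_{r+1})$ of $L$ with $u_jh'=\sum_{k=0}^jc_{jk0}e_k$, $c_{jk0}\in\mathbb Z$, $c_{jj0}>0$; put $\lambda=\prod_{j=1}^rc_{jj0}$ and let $a:L\to\mathbb Z$ be the linear form with $\lambda a=\det(h',u_1h',\dots,u_rh',\cdot)$ (determinant of coordinates in this basis). Write $au_j$ for $y\mapsto a(u_jy)$. Let $\mathcal A=(au_j(e_k))_{0\le j\le r,\,1\le k\le r+1}\in M_{r+1}(\mathbb Z)$, with elementary divisors $1=A_0\mid A_1\mid\dots\mid A_r$, and put $t=A_r$. Let $(b_{ij})_{1\le i\le r+1,0\le j\le r}=t\mathcal A^{-1}$ (an integer matrix) and $\alpha_j=\sum_{i=1}^{r+1}b_{ij}e_i\in L$, so that $au_k(\alpha_j)=t\delta_{jk}$ for all $0\le j,k\le r$. *)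

From HB Require Import structures.
From mathcomp Require Import all_boot all_order all_algebra all_field.
Set Implicit Arguments. Unset Strict Implicit. Unset Printing Implicit Defensive.
Import Order.TTheory GRing.Theory Num.Theory.
Local Open Scope ring_scope.

Section NF.
Variable K : fieldExtType rat.

Definition OK (x : K) : Prop :=
  exists p : {poly int}, p \is monic /\ root (map_poly (fun z : int => z%:~R) p) x.

(* (fractional) ideals are represented as subsets of K *)
Definition kset := K -> Prop.

Definition is_ideal (I : kset) : Prop :=
  (forall x, I x -> OK x) /\ I 0 /\ (forall x y, I x -> I y -> I (x - y)) /\
  (forall c x, OK c -> I x -> I (c * x)).

Definition int_ideal (I : kset) : Prop := is_ideal I /\ exists x, I x /\ x != 0.

Definition set_mul (I J : kset) : kset := fun z =>
  exists s : seq (K * K), (forall p, p \in s -> I p.1 /\ J p.2) /\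
                          z = \sum_(p <- s) p.1 * p.2.

Definition set_add (I J : kset) : kset := fun z => exists x y, I x /\ J y /\ z = x + y.

Definition set_inv (I : kset) : kset := fun x => forall y, I y -> OK (x * y).

Definition ideal_coprime (I J : kset) : Prop := forall x, OK x -> set_add I J x.

Definition generates_quot (M N : kset) (g : K) : Prop :=
  M g /\ forall x, M x -> exists z : int, N (x - z%:~R * g).

Definition cyclic_quot (M N : kset) : Prop := exists g, generates_quot M N g.

Definition ideal_norm (I : kset) (n : nat) : Prop :=
  exists s : seq K, size s = n /\ (forall x, x \in s -> OK x) /\
    (forall i j, (i < n)%N -> (j < n)%N -> I (nth 0 s i - nth 0 s j) -> i = j) /\
    (forall x, OK x -> exists2 i, (i < n)%N & I (x - nth 0 s i)).

(* embeddings sigma_0..sigma_{r-1} real, sigma_r complex, sigma_{r+1} its conjugate,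
   and these are all the embeddings K -> C, pairwise distinct *)
Definition one_complex_pair (r : nat) (sigma : 'I_(r.+2) -> {rmorphism K -> algC}) : Prop :=
  [/\ (forall i j, sigma i =1 sigma j -> i = j),
      (forall phi : {rmorphism K -> algC}, exists i, phi =1 sigma i),
      (forall i : 'I_(r.+2), (i < r)%N -> forall x, sigma i x \is Num.real),
      (exists x, sigma (inord r) x \isn't Num.real) &
      (forall x, sigma (inord r.+1) x = (sigma (inord r) x)^*)].

Definition positive_basis (r : nat) (sigma : 'I_(r.+2) -> {rmorphism K -> algC})
    (e : 'I_(r.+2) -> K) : Prop :=
  0 < 'i * \det (\matrix_(j, k) sigma j (e k)).

Definition zbasis (n : nat) (L : kset) (e : 'I_n -> K) : Prop :=
  free [tuple e i | i < n] /\
  forall x, L x <-> exists z : 'I_n -> int, x = \sum_i (z i)%:~R * e i.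

Definition primitive_in (L : kset) (x : K) : Prop :=
  L x /\ x != 0 /\ forall (k : int) y, L y -> x = k%:~R * y -> `|k| = 1.

Definition unit_plus_f (r : nat) (sigma : 'I_(r.+2) -> {rmorphism K -> algC})
    (f : kset) (u : K) : Prop :=
  [/\ u != 0, OK u, OK u^-1, f (u - 1) &
      forall i : 'I_(r.+2), (i < r)%N -> 0 < sigma i u].

(* admissible h (L = f b^{-1}, q, N = N(a)) *)
Definition admissible (L : kset) (q N : nat) (a : kset) (h : K) : Prop :=
  [/\ L h, L (h / q%:R - 1) & generates_quot (set_mul (set_inv a) L) L (h / N%:R)].

Definition lam (r : nat) (c : 'I_(r.+1) -> 'I_(r.+2) -> int) : int :=
  \prod_(j < r.+1 | j != ord0) c j (widen_ord (leqnSn _) j).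

Definition aform (r : nat) (e : 'I_(r.+2) -> K) (u : 'I_(r.+1) -> K) (h' : K)
    (c : 'I_(r.+1) -> 'I_(r.+2) -> int) (y : K) : rat :=
  let v := fun i : 'I_(r.+2) =>
    if unlift ord_max i is Some j then u j * h' else y in
  \det (\matrix_(i, k) coord [tuple e l | l < r.+2] k (v i)) / (lam c)%:~R.

Definition Amat (r : nat) (e : 'I_(r.+2) -> K) (u : 'I_(r.+1) -> K) (h' : K)
    (c : 'I_(r.+1) -> 'I_(r.+2) -> int) : 'M[rat]_(r.+1) :=
  \matrix_(j, k) aform e u h' c (u j * e (lift ord0 k)).

End NF.

Definition elem_divisors (n : nat) (A : 'M[rat]_n) (d : 'I_n -> int) : Prop :=
  exists P Q : 'M[int]_n, [/\ P \in unitmx, Q \in unitmx,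
    map_mx (fun z : int => z%:~R) P *m A *m map_mx (fun z : int => z%:~R) Q
      = diag_mx (\row_i (d i)%:~R : 'rV[rat]_n),
    (forall i, 0 <= d i) &
    (forall i j : 'I_n, (i <= j)%N -> (d i %| d j)%Z)].

From HB Require Import structures.
From mathcomp Require Import all_boot all_order all_algebra all_field.
Set Implicit Arguments. Unset Strict Implicit.
Import Order.TTheory GRing.Theory Num.Theory.
Local Open Scope ring_scope.

(* Write P A Q = D for the Smith normal form of A. If A M = x I with M integral,
   then D (Q^-1 M P^-1) = x I, so x is an integral multiple of every elementary
   divisor: this is (i), and (ii) is the case where M is the matrix of
   coordinates of the dual family on e_1, ..., e_{r+1} (a u_k vanishes on
   e_0 = h'). The forms a u_0, ..., a u_r are independent, since u_0, ..., u_r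
   are and a(e_{r+1}) = 1, so A is invertible and t != 0. If every alpha_j were
   congruent to a multiple of h' modulo pL, then t A^-1 = p Z with Z integral,
   so A Z = (t/p) I and t/p would be an integral multiple of t. *)

Local Notation intr_mx := (map_mx (fun z : int => (z%:~R : rat))).

Lemma intr_mx_mulmxV n (U : 'M[int]_n) :
  U \in unitmx -> intr_mx U *m intr_mx (invmx U) = 1%:M.
Proof. by move=> Uu; rewrite -map_mxM mulmxV // map_mx1. Qed.

Lemma intr_mx_unitmx n (U : 'M[int]_n) : U \in unitmx -> intr_mx U \in unitmx.
Proof. by rewrite !unitmxE det_map_mx; apply: rmorph_unit. Qed.

Section ElementaryDivisors.
Variables (n : nat) (A : 'M[rat]_n) (d : 'I_n -> int).
Hypothesis dA : elem_divisors A d.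

Lemma elem_divisors_scalar (M : 'M[int]_n) (x : rat) i :
  A *m intr_mx M = x%:M -> exists k : int, x = (d i * k)%:~R.
Proof.
case: dA => P [Q [Pu Qu PAQ _ _]] AM; exists ((invmx Q *m M *m invmx P) i i).
have /matrixP/(_ i i) :
    x%:M = diag_mx (\row_i (d i)%:~R) *m intr_mx (invmx Q *m M *m invmx P).
  rewrite -PAQ !map_mxM !mulmxA -[_ *m intr_mx Q *m _]mulmxA intr_mx_mulmxV // mulmx1.
  rewrite -[_ *m A *m _]mulmxA AM mul_mx_scalar -scalemxAl.
  by rewrite intr_mx_mulmxV // scalemx1.
by rewrite mul_diag_mx !mxE eqxx mulr1n rmorphM.
Qed.

Lemma elem_divisors_dvd_scalar (M : 'M[int]_n) (m : int) i :
  A *m intr_mx M = (m%:~R)%:M -> (d i %| m)%Z.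
Proof.
case/(elem_divisors_scalar i) => k /eqP; rewrite eqr_int => /eqP ->.
exact: dvdz_mulr.
Qed.

Hypothesis Au : A \in unitmx.

Lemma elem_divisors_neq0 i : d i != 0.
Proof.
case: dA => P [Q [Pu Qu PAQ _ _]].
have : diag_mx (\row_i (d i)%:~R : 'rV[rat]_n) \in unitmx.
  by rewrite -PAQ !unitmx_mul Au !intr_mx_unitmx.
rewrite unitmxE det_diag unitfE (bigD1 i) //= mxE mulf_eq0 negb_or intr_eq0.
by case/andP.
Qed.

Lemma elem_divisors_invmx_ndvd k (p : nat) : (1 < p)%N ->
  exists i j, ((d k)%:~R *: invmx A) i j / p%:R \isn't a Num.int.
Proof.
move=> p_gt1; set B := (d k)%:~R *: invmx A.
have p_neq0 : p%:R != 0 :> rat by rewrite pnatr_eq0 -lt0n ltnW.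
have dk_neq0 := elem_divisors_neq0 k.
have /forallPn[i /forallPn[j Bij]] : ~~ [forall i, forall j, B i j / p%:R \is a Num.int].
  apply/negP => /forallP Bint; pose Z := \matrix_(i, j) Num.floor (B i j / p%:R).
  have : A *m intr_mx Z = ((d k)%:~R / p%:R)%:M.
    rewrite (_ : intr_mx Z = p%:R^-1 *: B).
      by rewrite -!scalemxAr mulmxV // scalerA scalemx1 mulrC.
    apply/matrixP => i j; have := forallP (Bint i) j.
    by rewrite !mxE => /floorK ->; rewrite mulrC.
  case/(elem_divisors_scalar k) => z /(canRL (divfK p_neq0)) /eqP.
  rewrite -[p%:R]/((p%:Z)%:~R) -intrM eqr_int -{1}[d k]mulr1 -mulrA.
  move=> /eqP /(mulfI dk_neq0) one_eq_zp; have : (p%:Z %| 1)%Z by apply/dvdzP; exists z.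
  by rewrite dvdz1 /= => /eqP p1; rewrite p1 in p_gt1.
by exists i, j.
Qed.

End ElementaryDivisors.

Section Coordinates.
Variables (K : fieldExtType rat) (n : nat) (e : 'I_n -> K).
Local Notation E := [tuple e l | l < n].
Hypothesis e_free : free E.

Lemma coord_free_fun i k : coord E k (e i) = (i == k)%:R.
Proof. by have := coord_free i k e_free; rewrite -tnth_nth tnth_mktuple. Qed.

Lemma coord_zcomb (P : pred 'I_n) (z : 'I_n -> int) k :
  coord E k (\sum_(l | P l) (z l)%:~R * e l) = (if P k then z k else 0)%:~R.
Proof.
have coord_ze l : coord E k ((z l)%:~R * e l) = (z l)%:~R * (l == k)%:R.
  by rewrite mulrzl -scaler_int linearZ /= coord_free_fun.
rewrite raddf_sum big_mkcond (bigD1 k) //= big1 ?addr0 => [|l /negPf lk].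
  by case: (P k); rewrite ?coord_ze ?eqxx ?mulr1.
by case: (P l); rewrite ?coord_ze ?lk ?mulr0.
Qed.

Lemma coord_expansion y : \dim {: K} = n -> y = \sum_k coord E k y *: e k.
Proof.
move=> dimK; have Ebasis : basis_of fullv E.
  by rewrite basisEfree e_free subvf size_tuple dimK /=.
rewrite {1}(coord_basis Ebasis (memvf y)); apply: eq_bigr => k _.
by rewrite -tnth_nth tnth_mktuple.
Qed.

End Coordinates.

Lemma coord_zbasis_int (K : fieldExtType rat) n (e : 'I_n -> K) k L y :
  zbasis L e -> L y -> coord [tuple e l | l < n] k y \is a Num.int.
Proof. by case=> e_free Le /Le[z ->]; rewrite coord_zcomb // intr_int. Qed.

Lemma coord_sum_lift (K : fieldExtType rat) n (e : 'I_n.+1 -> K) (x : 'I_n -> rat) i :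
  free [tuple e l | l < n.+1] ->
  coord [tuple e l | l < n.+1] (lift ord0 i) (\sum_l x l *: e (lift ord0 l)) = x i.
Proof.
move=> e_free; rewrite linear_sum (bigD1 i) //= big1 ?addr0 => [|l /negPf nli].
  by rewrite linearZ /= coord_free_fun // eqxx mulr1.
by rewrite linearZ /= coord_free_fun // (inj_eq lift_inj) nli mulr0.
Qed.

Lemma coord_lift_congr_int (K : fieldExtType rat) n (e : 'I_n.+1 -> K) L i x y
    (z : int) (p : nat) :
  (0 < p)%N -> zbasis L e -> L x -> y - z%:~R * e ord0 = p%:R * x ->
  coord [tuple e l | l < n.+1] (lift ord0 i) y / p%:R \is a Num.int.
Proof.
move=> p_gt0 Lbasis Lx /(congr1 (coord [tuple e l | l < n.+1] (lift ord0 i))).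
rewrite linearB mulrzl -scaler_int linearZ /= coord_free_fun ?Lbasis.1 //.
rewrite (negPf (neq_lift _ _)) mulr0 subr0 mulr_natl raddfMn /= => ->.
rewrite -[X in X / _]mulr_natr mulfK ?pnatr_eq0 -?lt0n //.
exact: coord_zbasis_int _ Lbasis Lx.
Qed.

Section AForm.
Variables (K : fieldExtType rat) (r : nat) (e : 'I_(r.+2) -> K) (u : 'I_(r.+1) -> K).
Variables (h' : K) (c : 'I_(r.+1) -> 'I_(r.+2) -> int).
Local Notation E := [tuple e l | l < r.+2].
Local Notation a := (aform e u h' c).

Definition aform_mx (y : K) : 'M[rat]_(r.+2) :=
  \matrix_(i, l) coord E l (if unlift ord_max i is Some j then u j * h' else y).

Lemma aformE y : a y = \det (aform_mx y) / (lam c)%:~R.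
Proof. by []. Qed.

Lemma aform_is_scalar : scalar a.
Proof.
move=> k y z; rewrite !aformE mulrA -mulrDl.
rewrite (determinant_multilinear (i0 := ord_max) (b := k) (c := 1)
  (B := aform_mx y) (C := aform_mx z)) ?mul1r //.
- by apply/rowP => l; rewrite !mxE unlift_none linearP mul1r.
- by apply/matrixP => i l; rewrite !mxE liftK.
- by apply/matrixP => i l; rewrite !mxE liftK.
Qed.

HB.instance Definition _ := GRing.isLinear.Build rat K rat *%R a aform_is_scalar.

Lemma aform_u_h' j : a (u j * h') = 0.
Proof.
rewrite aformE (determinant_alternate (i1 := lift ord_max j) (i2 := ord_max)) ?mul0r //.
- by rewrite eq_sym neq_lift.
- by move=> k; rewrite !mxE liftK unlift_none.
Qed.

Hypothesis e_free : free E.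
Hypothesis u_h'_trig : forall j : 'I_(r.+1),
  u j * h' = \sum_(k < r.+2 | (k <= j)%N) (c j k)%:~R * e k.

Lemma coord_u_h' j k : coord E k (u j * h') = (if (k <= j)%N then c j k else 0)%:~R.
Proof. by rewrite u_h'_trig coord_zcomb. Qed.

Lemma coord_u_h'_diag j :
  coord E (widen_ord (leqnSn _) j) (u j * h') = (c j (widen_ord (leqnSn _) j))%:~R.
Proof. by rewrite coord_u_h' /= leqnn. Qed.

Hypothesis e0 : e ord0 = h'.
Hypothesis u0 : u ord0 = 1.
Hypothesis c_gt0 : forall j : 'I_(r.+1), 0 < c j (widen_ord (leqnSn _) j).

(* aform_mx (e ord_max) is lower triangular with diagonal c_00 = 1, c_11, ..., c_rr, 1,
   and lam c is the product of the c_jj for j > 0. *)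
Lemma aform_e_max : a (e ord_max) = 1.
Proof.
have lam_neq0 : (lam c)%:~R != 0 :> rat by rewrite intr_eq0 lt0r_neq0 // prodr_gt0.
have c00 : c ord0 (widen_ord (leqnSn _) ord0) = 1.
  by apply: (@intr_inj rat); rewrite -coord_u_h'_diag u0 mul1r -e0 coord_free_fun.
have trig : is_trig_mx (aform_mx (e ord_max)).
  apply/is_trig_mxP => i k; case: (unliftP ord_max i) => [j ->|->] ik; rewrite mxE.
    by rewrite liftK coord_u_h' -ltnS -(lift_max j) ltnNge ik.
  by rewrite ltnNge -ltnS ltn_ord in ik.
have diag j : aform_mx (e ord_max) (widen_ord (leqnSn _) j) (widen_ord (leqnSn _) j)
    = (c j (widen_ord (leqnSn _) j))%:~R.
  have -> : widen_ord (leqnSn _) j = lift ord_max j by apply: val_inj; rewrite [RHS]lift_max.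
  by rewrite mxE liftK coord_u_h' lift_max leqnn.
rewrite aformE det_trig // big_ord_recr /= !mxE unlift_none coord_free_fun // eqxx mulr1.
under eq_bigr => j _ do rewrite diag.
by rewrite (bigD1 ord0) //= c00 mul1r -rmorph_prod divff.
Qed.

Hypothesis dimK : \dim {: K} = r.+2.

Lemma aform_mul_coord k y :
  a (u k * y) = \sum_i Amat e u h' c k i * coord E (lift ord0 i) y.
Proof.
rewrite {1}(coord_expansion e_free y dimK) mulr_sumr raddf_sum big_ord_recl /=.
rewrite -scalerAr linearZ /= e0 aform_u_h' mulr0 add0r.
by apply: eq_bigr => i _; rewrite -scalerAr linearZ /= mxE mulrC.
Qed.

Lemma Amat_mul_zcoord L (y : 'I_(r.+1) -> K) : zbasis L e -> (forall j, L (y j)) ->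
  exists M : 'M[int]_(r.+1), Amat e u h' c *m intr_mx M = \matrix_(k, j) a (u k * y j).
Proof.
move=> Lbasis Ly; exists (\matrix_(i, j) numq (coord E (lift ord0 i) (y j))).
apply/matrixP => k j; rewrite !mxE aform_mul_coord; apply: eq_bigr => i _.
by rewrite !mxE numqK // (coord_zbasis_int _ Lbasis (Ly j)).
Qed.

Hypothesis u_free : free [tuple u j | j < r.+1].

(* A row relation x A = 0 yields w = \sum_j x_j u_j != 0 with a (w y) = 0 for all y,
   which fails at y = w^-1 e_max. *)
Lemma Amat_unit : Amat e u h' c \in unitmx.
Proof.
rewrite unitmxE unitfE; apply/negP => /det0P[x x_neq0 xA0].
set w := \sum_j x 0 j *: u j.
have w_neq0 : w != 0.
  apply: contra x_neq0 => /eqP w0; apply/eqP/rowP => j; rewrite mxE.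
  move/freeP: u_free; apply=> //; rewrite -[RHS]w0.
  by apply: eq_bigr => i _; rewrite -tnth_nth tnth_mktuple.
have aw0 y : a (w * y) = 0.
  rewrite mulr_suml raddf_sum /=.
  under eq_bigr => j _ do rewrite -scalerAl linearZ /= aform_mul_coord mulr_sumr.
  rewrite exchange_big big1 //= => i _.
  have /rowP/(_ i) := xA0; rewrite !mxE => xAi0.
  by under eq_bigr => j _ do rewrite mulrA; rewrite -mulr_suml xAi0 mul0r.
have := aform_e_max; rewrite -[e ord_max](mulVKf w_neq0) aw0.
by move/eqP; rewrite eq_sym oner_eq0.
Qed.

End AForm.

Theorem lemma12
  (K : fieldExtType rat) (r : nat)
  (sigma : 'I_(r.+2) -> {rmorphism K -> algC})
  (f b a : kset K) (q N : nat) (h : K)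
  (u : 'I_(r.+1) -> K) (m : nat) (h' : K) (e : 'I_(r.+2) -> K)
  (c : 'I_(r.+1) -> 'I_(r.+2) -> int)
  (Ad : 'I_(r.+1) -> int) :
  \dim {: K} = r.+2 ->
  one_complex_pair sigma ->
  int_ideal f -> ~ (forall x, OK x -> f x) ->
  (0 < q)%N -> (forall z : int, f z%:~R <-> (q%:Z %| z)%Z) ->
  int_ideal b -> ideal_coprime b f ->
  let L := set_mul f (set_inv b) in
  int_ideal a -> ideal_coprime a (set_mul f b) ->
  cyclic_quot (set_mul (set_inv a) L) L ->
  ideal_norm a N ->
  admissible L q N a h ->
  u ord0 = 1 ->
  (forall j, j != ord0 -> unit_plus_f sigma f (u j)) ->
  free [tuple u j | j < r.+1] ->
  (0 < m)%N -> primitive_in L h' -> h = m%:R * h' ->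
  zbasis L e -> e ord0 = h' -> positive_basis sigma e ->
  (forall j : 'I_(r.+1),
     u j * h' = \sum_(k < r.+2 | (k <= j)%N) (c j k)%:~R * e k) ->
  (forall j : 'I_(r.+1), 0 < c j (widen_ord (leqnSn _) j)) ->
  let A := Amat e u h' c in
  elem_divisors A Ad ->
  let t := Ad ord_max in
  let B := (t%:~R : rat) *: invmx A in
  let alpha := fun j : 'I_(r.+1) =>
    \sum_(i < r.+1) B i j *: e (lift ord0 i) in
  (* (i) *)
  (forall (n : int) (B' : 'M[int]_(r.+1)),
     A *m map_mx (fun z : int => z%:~R) B' = (n%:~R : rat)%:M -> (t %| n)%Z) /\
  (* (ii) *)
  (forall (n : int) (alpha' : 'I_(r.+1) -> K), 0 < n ->
     (forall j, L (alpha' j)) ->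
     (forall j k : 'I_(r.+1),
        aform e u h' c (u k * alpha' j) = if j == k then n%:~R else 0) ->
     (t %| n)%Z) /\
  (* (iii) *)
  (forall p : nat, prime p ->
     exists j : 'I_(r.+1), forall n' : int,
       ~ (exists x, L x /\ alpha j - n'%:~R * h' = p%:R * x)).
Proof.
move=> dimK _ _ _ _ _ _ _ L _ _ _ _ _ u0 _ u_free _ _ _ Lbasis e0 _ u_h'_trig c_gt0
  A dA t B alpha.
have e_free := Lbasis.1.
have Au : A \in unitmx := Amat_unit e_free u_h'_trig e0 u0 c_gt0 dimK u_free.
split; [|split].
- by move=> n B'; apply: elem_divisors_dvd_scalar.
- move=> n alpha' _ Lalpha' dual.
  have [M AM] := Amat_mul_zcoord u c e_free e0 dimK Lbasis Lalpha'.
  apply: (elem_divisors_dvd_scalar dA (M := M)); rewrite AM.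
  by apply/matrixP => k j; rewrite !mxE dual eq_sym; case: eqP.
- move=> p p_prime.
  have [i [j Bij]] := elem_divisors_invmx_ndvd dA Au ord_max (prime_gt1 p_prime).
  exists j => n' [x [Lx alphaE]]; rewrite -e0 in alphaE; apply: (negP Bij).
  have := coord_lift_congr_int i (prime_gt0 p_prime) Lbasis Lx alphaE.
  by rewrite /alpha coord_sum_lift.
Qed.
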